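(* Let $G$ be a finite simple graph with $n=|V(G)|$, and let $v_1,\dots,v_r$ be a $\beta$-sequence in $G$ which is not contained in any $(r+1)$-clique of $G$. Then $r\ge W(G)$.
   Context: Graphs are finite, undirected, without loops or multiple edges; $N(v)$ is the set of vertices adjacent to $v$, $d(v)=|N(v)|$, and $N(v_1,\dots,v_k)=\bigcap_{j=1}^k N(v_j)$. A $p$-clique is a set of $p$ pairwise adjacent vertices. Define $W(G)=\sum_{v\in V(G)}\frac{1}{n-d(v)}$. A sequence $v_1,\dots,v_r$ of vertices is a $\beta$-sequence in $G$ if (i) $d(v_1)=\max\{d(v)\mid v\in V(G)\}$, and (ii) for $2\le i\le r$, $v_i\in N(v_1,\dots,v_{i-1})$ and $d(v_i)=\max\{d(v)\mid v\in N(v_1,\dots,v_{i-1})\}$ (degrees taken in $G$). *)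

From mathcomp Require Import all_boot all_order all_algebra.
Set Implicit Arguments. Unset Strict Implicit. Unset Printing Implicit Defensive.
Import Order.TTheory GRing.Theory Num.Theory.

Section Graphs.
Variable T : finType.
Variable e : rel T.

Definition simple_graph : Prop := irreflexive e /\ symmetric e.

Definition nbhd (v : T) : {set T} := [set u | e v u].
Definition deg (v : T) : nat := #|nbhd v|.
Definition common_nbhd (s : seq T) : {set T} := [set u | all (fun v => e v u) s].

Definition W : rat := \sum_(v : T) 1 / ((#|T| - deg v)%N)%:R.

Definition is_clique (K : {set T}) : Prop :=
  forall x y, x \in K -> y \in K -> x != y -> e x y.

Definition beta_sequence (s : seq T) : Prop :=
  match s with
  | [::] => False
  | v1 :: _ =>
      (forall u : T, deg u <= deg v1) /\
      (forall i, 0 < i < size s ->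
         forall x0 : T,
         let vi := nth x0 s i in
         let Ni := common_nbhd (take i s) in
         vi \in Ni /\ (forall u, u \in Ni -> deg u <= deg vi))
  end.

Definition not_in_larger_clique (s : seq T) : Prop :=
  ~ exists K : {set T}, [/\ is_clique K, #|K| = (size s).+1 & [set x in s] \subset K].

End Graphs.

(* Peel off the common neighbourhoods N_k = N(v_1,...,v_k): N_0 = V and, since
   v_1,...,v_r is not contained in an (r+1)-clique, N_r is empty.  A vertex
   u of N_k \ N_(k+1) is not adjacent to v_(k+1), and d(u) <= d(v_(k+1)) by the
   greedy choice of v_(k+1); so N_k \ N_(k+1) has at most n - d(v_(k+1))
   elements, each of weight 1/(n - d(u)) <= 1/(n - d(v_(k+1))), and contributes
   at most 1 to W(G).  Summing over k = 0,...,r-1 gives W(G) <= r. *)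
From mathcomp Require Import all_boot all_order all_algebra.
Set Implicit Arguments. Unset Strict Implicit. Unset Printing Implicit Defensive.
Import Order.TTheory GRing.Theory Num.Theory.
Local Open Scope ring_scope.

Section Graph.
Variables (T : finType) (e : rel T).

Definition weight (v : T) : rat := 1 / (#|T| - deg e v)%:R.

Lemma common_nbhd_nil : common_nbhd e [::] = setT.
Proof. by apply/setP => u; rewrite !inE. Qed.

Lemma common_nbhd_rcons s v :
  common_nbhd e (rcons s v) = common_nbhd e s :&: nbhd e v.
Proof. by apply/setP => u; rewrite !inE all_rcons andbC. Qed.

Lemma card_non_nbhd v : #|~: nbhd e v| = (#|T| - deg e v)%N.
Proof. by rewrite /deg -(cardsC (nbhd e v)) addKn. Qed.

Lemma sum_weight_non_nbhd_le1 v (D : {set T}) :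
  D \subset ~: nbhd e v -> {in D, forall u, deg e u <= deg e v}%N ->
  \sum_(u in D) weight u <= 1.
Proof.
move=> sub_D deg_D.
have card_D : (#|D| <= #|T| - deg e v)%N.
  by rewrite -card_non_nbhd subset_leq_card.
have [D0 | D_gt0] := posnP #|D|; first by rewrite (cards0_eq D0) big_set0.
have m_gt0 : (0 < #|T| - deg e v)%N := leq_trans D_gt0 card_D.
apply: (@le_trans _ _ (\sum_(u in D) 1 / (#|T| - deg e v)%:R)).
  apply: ler_sum => u /deg_D deg_u.
  have le_m : (#|T| - deg e v <= #|T| - deg e u)%N by rewrite leq_sub2l.
  by rewrite /weight !div1r lef_pV2 ?ler_nat // posrE ltr0n // (leq_trans m_gt0).
rewrite sumr_const -[_ *+ #|D|]mulr_natl mulrA mulr1 ler_pdivrMr ?ltr0n // mul1r ler_nat.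
exact: card_D.
Qed.

Hypotheses (e_irr : irreflexive e) (e_sym : symmetric e).

Lemma pairwise_clique s : pairwise e s -> is_clique e [set x in s].
Proof.
move=> s_adj x y; rewrite !inE; move/(pairwiseP x): s_adj => s_adj.
case/(nthP x) => i lt_i <-; case/(nthP x) => j lt_j <- neq_ij.
case: (ltngtP i j) => [lt_ij | lt_ji | eq_ij].
- exact: s_adj.
- by rewrite e_sym; apply: s_adj.
- by rewrite eq_ij eqxx in neq_ij.
Qed.

Lemma pairwise_common_nbhd_eq0 s :
  pairwise e s -> not_in_larger_clique e s -> common_nbhd e s = set0.
Proof.
move=> s_adj no_clique; apply/setP => u; rewrite in_set0; apply/negP.
rewrite inE => /allP u_adj_s.
have u_notin_s : u \notin [set x in s].
  by rewrite inE; apply/negP => /u_adj_s; rewrite e_irr.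
apply: no_clique; exists (u |: [set x in s]); split; last exact: subsetUr.
- move=> x y; rewrite !inE => /predU1P[-> | xs] /predU1P[-> | ys] neq_xy.
  + by rewrite eqxx in neq_xy.
  + by rewrite e_sym u_adj_s.
  + exact: u_adj_s.
  + by apply: (pairwise_clique s_adj _ _ neq_xy); rewrite inE.
- by rewrite cardsU1 u_notin_s cardsE (card_uniqP (pairwise_uniq e_irr s_adj)).
Qed.

Section GreedySequence.
Variables (s : seq T) (x0 : T).

Let N k := common_nbhd e (take k s).

(* The beta-sequence condition; (i) is its case [i = 0], as [N 0] is the
   whole vertex set. *)
Hypothesis s_greedy : forall i, (i < size s)%N ->
  nth x0 s i \in N i /\ {in N i, forall u, deg e u <= deg e (nth x0 s i)}%N.

Lemma greedy_pairwise : pairwise e s.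
Proof.
apply/(pairwiseP x0) => i j; rewrite !inE => _ lt_j lt_ij.
have [+ _] := s_greedy lt_j; rewrite inE => /allP; apply.
by rewrite -(nth_take x0 lt_ij) mem_nth // size_take lt_j.
Qed.

Lemma nbhd_prefix_succ k :
  (k < size s)%N -> N k.+1 = N k :&: nbhd e (nth x0 s k).
Proof. by move=> lt_k; rewrite /N (take_nth x0 lt_k) common_nbhd_rcons. Qed.

Lemma sum_weight_outside_nbhd_prefix k :
  (k <= size s)%N -> \sum_(v in ~: N k) weight v <= k%:R.
Proof.
elim: k => [_ | k IHk lt_k].
  by rewrite /N take0 common_nbhd_nil setCT big_set0.
have [_ deg_Nk] := s_greedy lt_k.
have out_k : \sum_(v in ~: N k.+1 | v \notin N k) weight v
             = \sum_(v in ~: N k) weight v.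
  apply: eq_bigl => v; rewrite nbhd_prefix_succ // !in_setC in_setI.
  by rewrite andb_idl // => /negbTE ->.
have left_k : \sum_(v in ~: N k.+1 | v \in N k) weight v
              = \sum_(v in N k :\: N k.+1) weight v.
  by apply: eq_bigl => v; rewrite !inE andbC.
rewrite (bigID (mem (N k))) /= out_k left_k -natr1 addrC lerD ?IHk ?(ltnW lt_k) //.
apply: (@sum_weight_non_nbhd_le1 (nth x0 s k)).
  apply/subsetP => v; rewrite nbhd_prefix_succ // in_setD !in_setC in_setI.
  by rewrite negb_and andb_orl andNb => /andP[].
by move=> v; rewrite inE => /andP[_ /deg_Nk].
Qed.

End GreedySequence.
End Graph.

Lemma beta_sequence_greedy (T : finType) (e : rel T) (x0 : T) (s : seq T) :
  beta_sequence e s -> forall i, (i < size s)%N ->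
  nth x0 s i \in common_nbhd e (take i s) /\
  {in common_nbhd e (take i s), forall u, deg e u <= deg e (nth x0 s i)}%N.
Proof.
case: s => [|v1 s] // [deg_v1 beta_s] [_ | i lt_i].
  by rewrite take0 common_nbhd_nil inE; split=> // u _; apply: deg_v1.
exact: beta_s i.+1 lt_i x0.
Qed.

Theorem mainTheorem5 (T : finType) (e : rel T) (s : seq T) :
  simple_graph e -> beta_sequence e s -> not_in_larger_clique e s ->
  W e <= (size s)%:R.
Proof.
case=> e_irr e_sym; case: s => [|x0 s'] // beta_s no_clique.
have s_greedy := beta_sequence_greedy x0 beta_s.
have := sum_weight_outside_nbhd_prefix s_greedy (leqnn _).
rewrite take_size pairwise_common_nbhd_eq0 ?(greedy_pairwise s_greedy) // setC0.
by rewrite /W (eq_bigl predT) // => v; rewrite inE.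
Qed.
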